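(* Let $X$ be a homogeneous chain that is not simple and has no proper regular interval which is a simple chain. Then $(\mathrm{Aut}(X),\tau_p)$ is Roelcke precompact if and only if for every proper regular interval $J$ of $X$ the group $(\mathrm{Aut}(X/J),\tau_\partial)$ is Roelcke precompact.
   Context: Chain: linearly ordered set; $\mathrm{Aut}(Y)$: order-preserving bijections; homogeneous: $\mathrm{Aut}(X)$ transitive. An interval is a convex subset; $J$ is regular if for all $x,y\in J$, $g\in\mathrm{Aut}(X)$, $g(x)\in J\Rightarrow g(y)\in J$; proper if neither a singleton nor $X$. A homogeneous chain is simple if it has no proper regular interval. For a proper regular interval $J$, $X/J$ is the chain of equivalence classes of $x\sim_J y\iff\forall g\in\mathrm{Aut}(X)\,(g(x)\in J\Rightarrow g(y)\in J)$, with the induced order. $\tau_p$: topology of pointwise convergence w.r.t. the order topology on $X$; $\tau_\partial$: permutation topology (identity neighbourhood base: pointwise stabilizers of finite sets). Roelcke precompact: the Roelcke uniformity (greatest lower bound of left and right uniformities) is totally bounded. *)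

From Stdlib Require Import List.
Import ListNotations.
Set Implicit Arguments.

Section Chains.
Context {T : Type} (lt : T -> T -> Prop).

Definition is_chain : Prop :=
  (forall x, ~ lt x x) /\
  (forall x y z, lt x y -> lt y z -> lt x z) /\
  (forall x y, lt x y \/ x = y \/ lt y x).

Definition is_aut (f : T -> T) : Prop :=
  (exists g : T -> T, (forall x, g (f x) = x) /\ (forall y, f (g y) = y)) /\
  (forall x y, lt x y -> lt (f x) (f y)).

Definition homogeneous : Prop :=
  forall x y, exists g, is_aut g /\ g x = y.

Definition interval (J : T -> Prop) : Prop :=
  (exists x, J x) /\
  (forall x y z, J x -> J z -> lt x y -> lt y z -> J y).

Definition regular (J : T -> Prop) : Prop :=
  forall x y g, J x -> J y -> is_aut g -> J (g x) -> J (g y).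

Definition proper (J : T -> Prop) : Prop :=
  ~ (exists x, forall y, J y <-> y = x) /\ ~ (forall y, J y).

Definition proper_regular_interval (J : T -> Prop) : Prop :=
  interval J /\ regular J /\ proper J.

Definition simple : Prop :=
  homogeneous /\ forall J, ~ proper_regular_interval J.

Definition above (l : option T) (y : T) : Prop :=
  match l with None => True | Some a => lt a y end.
Definition below (u : option T) (y : T) : Prop :=
  match u with None => True | Some b => lt y b end.

Definition order_open (O : T -> Prop) : Prop :=
  forall x, O x -> exists l u : option T,
    above l x /\ below u x /\ (forall y, above l y -> below u y -> O y).

(** tau_p: identity neighbourhoods in Aut for the topology of pointwise
    convergence w.r.t. the order topology: U contains a basic open set
    {g | g x_i in O_i for all i} with O_i order-open and x_i in O_i. *)
Definition tau_p_nbhd (U : (T -> T) -> Prop) : Prop :=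
  exists s : list (T * (T -> Prop)),
    (forall p, In p s -> order_open (snd p) /\ snd p (fst p)) /\
    (forall g, is_aut g -> (forall p, In p s -> snd p (g (fst p))) -> U g).

(** tau_partial: identity neighbourhoods = sets containing the pointwise
    stabiliser of a finite set. *)
Definition tau_d_nbhd (U : (T -> T) -> Prop) : Prop :=
  exists A : list T,
    forall g, is_aut g -> (forall a, In a A -> g a = a) -> U g.

(** Roelcke precompactness of Aut with respect to a system of identity
    neighbourhoods: for every identity neighbourhood U there is a finite
    F in Aut with Aut = U F U (total boundedness of the Roelcke uniformity). *)
Definition roelcke_precompact (nbhd : ((T -> T) -> Prop) -> Prop) : Prop :=
  forall U, nbhd U ->
    exists F : list (T -> T),
      (forall f, In f F -> is_aut f) /\
      (forall g, is_aut g -> exists u1 u2 f,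
          is_aut u1 /\ U u1 /\ is_aut u2 /\ U u2 /\ In f F /\
          forall x, g x = u1 (f (u2 x))).

Definition simJ (J : T -> Prop) (x y : T) : Prop :=
  forall g, is_aut g -> J (g x) -> J (g y).

Definition quot (J : T -> Prop) : Type :=
  { C : T -> Prop | exists x, C = simJ J x }.

Definition quot_lt (J : T -> Prop) (C D : quot J) : Prop :=
  forall x y, proj1_sig C x -> proj1_sig D y -> lt x y.

End Chains.

Definition sub_lt {T : Type} (lt : T -> T -> Prop) (J : T -> Prop)
  (a b : { x : T | J x }) : Prop := lt (proj1_sig a) (proj1_sig b).
Arguments quot_lt {T} lt J C D.

From Stdlib Require Import List Classical FunctionalExtensionality PropExtensionality
  ProofIrrelevance ClassicalEpsilon.

(* Every automorphism of X permutes the ~_J-classes and so induces an automorphism of X/J;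
   conversely, by homogeneity every class is a translate of J, so every automorphism of X/J lifts
   to an automorphism of X inducing it.  Classes of a proper regular interval are open, so a
   tau_partial-neighbourhood of X/J pulls back to a tau_p-neighbourhood, and Roelcke factorisations
   in Aut(X) descend to Aut(X/J).  Conversely, proper regular intervals through a common point are
   nested, and under the hypotheses their intersection at x is {x}: otherwise it is itself a
   proper regular interval, hence not simple, hence contains a strictly smaller one K, and the
   K-class of x, a translate of K, cannot contain the whole intersection.  So a basic
   tau_p-neighbourhood contains all automorphisms keeping finitely many given points in their
   ~_J-classes, for a single J, and Roelcke factorisations in Aut(X/J) lift back to Aut(X). *)

Lemma proj1_sig_inj {A : Type} {P : A -> Prop} (u v : sig P) : proj1_sig u = proj1_sig v -> u = v.
Proof. apply eq_sig_hprop. intros. apply proof_irrelevance. Qed.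

Section Chains.
Context {T : Type} {lt : T -> T -> Prop}.
Hypothesis Hch : is_chain lt.

Lemma chain_irrefl x : ~ lt x x.
Proof. exact (proj1 Hch x). Qed.

Lemma chain_trans x y z : lt x y -> lt y z -> lt x z.
Proof. exact (proj1 (proj2 Hch) x y z). Qed.

Lemma chain_total x y : lt x y \/ x = y \/ lt y x.
Proof. exact (proj2 (proj2 Hch) x y). Qed.

Lemma aut_id : is_aut lt (fun x => x).
Proof. split; [exists (fun x => x); split; reflexivity | auto]. Qed.

Lemma aut_comp f g : is_aut lt f -> is_aut lt g -> is_aut lt (fun x => f (g x)).
Proof.
  intros [[f' [Hf1 Hf2]] Hf] [[g' [Hg1 Hg2]] Hg]. split.
  - exists (fun y => g' (f' y)). split; intros.
    + rewrite Hf1. apply Hg1.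
    + rewrite Hg2. apply Hf2.
  - auto.
Qed.

Lemma aut_reflect_lt f x y : is_aut lt f -> lt (f x) (f y) -> lt x y.
Proof.
  intros [_ Hf] H.
  destruct (chain_total x y) as [Hxy | [-> | Hyx]]; [exact Hxy | |].
  - destruct (chain_irrefl _ H).
  - destruct (chain_irrefl (f x)). exact (chain_trans _ _ _ H (Hf _ _ Hyx)).
Qed.

Lemma aut_inj f x y : is_aut lt f -> f x = f y -> x = y.
Proof. intros [[f' [Hl _]] _] H. rewrite <- (Hl x), <- (Hl y), H. reflexivity. Qed.

Lemma aut_inv f : is_aut lt f ->
  exists g, is_aut lt g /\ (forall x, g (f x) = x) /\ (forall y, f (g y) = y).
Proof.
  intros Hf. pose proof Hf as [[g [Hl Hr]] _]. exists g.
  repeat split; auto.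
  - exists f. auto.
  - intros x y Hxy. apply (aut_reflect_lt f _ _ Hf). rewrite !Hr. exact Hxy.
Qed.

Lemma interval_above J x a z : interval lt J -> J x -> ~ J a -> lt a x -> J z -> lt a z.
Proof.
  intros [_ C] Jx Na Hax Jz.
  destruct (chain_total a z) as [H | [-> | H]]; [exact H | contradiction |].
  destruct (Na (C z a x Jz Jx H Hax)).
Qed.

Lemma interval_below J x a z : interval lt J -> J x -> ~ J a -> lt x a -> J z -> lt z a.
Proof.
  intros [_ C] Jx Na Hxa Jz.
  destruct (chain_total z a) as [H | [<- | H]]; [exact H | contradiction |].
  destruct (Na (C x a z Jx Jz Hxa H)).
Qed.

Lemma interval_lt_of_disjoint A B x y a b :
  interval lt A -> interval lt B -> (forall z, A z -> B z -> False) ->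
  A x -> B y -> lt x y -> A a -> B b -> lt a b.
Proof.
  intros [_ CA] [_ CB] Hdisj Ax By Hxy Aa Bb.
  destruct (chain_total a b) as [Hab | [<- | Hba]]; [exact Hab | destruct (Hdisj a Aa Bb) |].
  exfalso. destruct (chain_total a y) as [Hay | [-> | Hya]].
  - exact (Hdisj a Aa (CB b a y Bb By Hba Hay)).
  - exact (Hdisj y Aa By).
  - exact (Hdisj y (CA x y a Ax Aa Hxy Hya) By).
Qed.

Lemma interval_differences_opposite A B x a b :
  interval lt A -> interval lt B -> A x -> B x -> A a -> ~ B a -> B b -> ~ A b ->
  (lt a x /\ lt x b) \/ (lt b x /\ lt x a).
Proof.
  intros [_ CA] [_ CB] Ax Bx Aa Na Bb Nb.
  destruct (chain_total a x) as [Hax | [-> | Hxa]]; [| contradiction |];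
  destruct (chain_total b x) as [Hbx | [-> | Hxb]]; try contradiction; auto;
  exfalso; destruct (chain_total a b) as [Hab | [-> | Hba]]; try contradiction.
  - exact (Nb (CA a b x Aa Ax Hab Hbx)).
  - exact (Na (CB b a x Bb Bx Hba Hax)).
  - exact (Na (CB x a b Bx Bb Hxa Hab)).
  - exact (Nb (CA x b a Ax Aa Hxb Hba)).
Qed.

End Chains.

Section RegularIntervals.
Context {T : Type} {lt : T -> T -> Prop}.
Hypothesis Hch : is_chain lt.
Hypothesis Hhom : homogeneous lt.

Lemma regular_intervals_not_crossing A B a x b :
  interval lt A -> regular lt A -> interval lt B -> regular lt B ->
  A a -> ~ B a -> A x -> B x -> B b -> ~ A b -> lt a x -> lt x b -> False.
Proof.
  intros [_ CA] RA [_ CB] RB Aa Na Ax Bx Bb Nb Hax Hxb.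
  destruct (Hhom a x) as [g [Hg Hga]].
  destruct (aut_inv Hch g Hg) as [gi [Hgi [Hgl _]]].
  assert (Agx : A (g x)) by (apply (RA a x g); auto; rewrite Hga; exact Ax).
  assert (Hxgx : lt x (g x)) by (rewrite <- Hga at 1; apply Hg; exact Hax).
  assert (Hgxb : lt (g x) b).
  { destruct (chain_total Hch (g x) b) as [H | [<- | H]]; [exact H | contradiction |].
    destruct (Nb (CA x b (g x) Ax Agx Hxb H)). }
  apply Na. rewrite <- (Hgl a), Hga.
  apply (RB (g x) x gi); [exact (CB x (g x) b Bx Bb Hxgx Hgxb) | exact Bx | exact Hgi |].
  rewrite Hgl. exact Bx.
Qed.

Lemma regular_intervals_nested A B x :
  interval lt A -> regular lt A -> interval lt B -> regular lt B -> A x -> B x ->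
  (forall y, A y -> B y) \/ (forall y, B y -> A y).
Proof.
  intros IA RA IB RB Ax Bx.
  apply NNPP. intros [NAB NBA]%not_or_and.
  apply not_all_ex_not in NAB as [a [Aa Na]%imply_to_and].
  apply not_all_ex_not in NBA as [b [Bb Nb]%imply_to_and].
  destruct (interval_differences_opposite Hch A B x a b) as [[Hax Hxb] | [Hbx Hxa]]; auto.
  - exact (regular_intervals_not_crossing A B a x b IA RA IB RB Aa Na Ax Bx Bb Nb Hax Hxb).
  - exact (regular_intervals_not_crossing B A b x a IB RB IA RA Bb Nb Bx Ax Aa Na Hbx Hxa).
Qed.

Lemma simJ_refl J x : simJ lt J x x.
Proof. intros g _ H. exact H. Qed.

Lemma simJ_trans J x y z : simJ lt J x y -> simJ lt J y z -> simJ lt J x z.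
Proof. intros Hxy Hyz g Hg H. exact (Hyz g Hg (Hxy g Hg H)). Qed.

Lemma simJ_aut J h x y : is_aut lt h -> simJ lt J x y -> simJ lt J (h x) (h y).
Proof. intros Hh H g Hg. exact (H (fun z => g (h z)) (aut_comp g h Hg Hh)). Qed.

Lemma simJ_aut_reflect J h x y : is_aut lt h -> simJ lt J (h x) (h y) -> simJ lt J x y.
Proof.
  intros Hh H. destruct (aut_inv Hch h Hh) as [hi [Hhi [Hl _]]].
  rewrite <- (Hl x), <- (Hl y). exact (simJ_aut J hi _ _ Hhi H).
Qed.

Lemma simJ_mem J j y : J j -> simJ lt J j y -> J y.
Proof. intros Hj H. exact (H (fun z => z) aut_id Hj). Qed.

Lemma simJ_of_mem J j y : regular lt J -> J j -> J y -> simJ lt J j y.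
Proof. intros R Hj Hy g Hg H. exact (R j y g Hj Hy Hg H). Qed.

Lemma simJ_sym J x y : interval lt J -> regular lt J -> simJ lt J x y -> simJ lt J y x.
Proof.
  intros [[j Hj] _] R H.
  destruct (Hhom x j) as [h [Hh Hhx]].
  apply (simJ_aut_reflect J h); [exact Hh |].
  apply simJ_of_mem; [exact R | | rewrite Hhx; exact Hj].
  apply (H h Hh). rewrite Hhx. exact Hj.
Qed.

Section Classes.
Variable J : T -> Prop.
Hypothesis IJ : interval lt J.
Hypothesis RJ : regular lt J.

Lemma class_interval x : interval lt (simJ lt J x).
Proof.
  split; [exists x; apply simJ_refl |].
  intros a y b Ha Hb Hay Hyb g Hg Hgx.
  apply (proj2 IJ (g a) (g y) (g b)); auto; apply Hg; assumption.
Qed.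

Lemma class_regular x : regular lt (simJ lt J x).
Proof.
  intros a b g Ha Hb Hg Hga.
  apply simJ_trans with (g a); [exact Hga |].
  apply simJ_aut; [exact Hg |].
  apply simJ_trans with x; [apply simJ_sym |]; assumption.
Qed.

Lemma class_proper x : proper J -> proper (simJ lt J x).
Proof.
  intros [NS NT]. split.
  - intros [c Hc]. apply NS.
    destruct IJ as [[j Hj] _]. exists j. intro a. split; [| intros ->; exact Hj].
    intro Ha. destruct (Hhom j x) as [h [Hh Hhj]].
    assert (Hha : simJ lt J x (h a)) by (rewrite <- Hhj; apply simJ_aut, simJ_of_mem; auto).
    apply (aut_inj h a j Hh).
    rewrite (proj1 (Hc _) Hha), Hhj. symmetry. apply Hc, simJ_refl.
  - intros Hall. apply NT. intro w.
    destruct IJ as [[j Hj] _]. destruct (Hhom x j) as [h [Hh Hhx]].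
    destruct (aut_inv Hch h Hh) as [hi [_ [_ Hr]]].
    apply (simJ_mem J j); [exact Hj |].
    rewrite <- Hhx, <- (Hr w). apply simJ_aut; auto.
Qed.

Lemma class_two_sided y : proper J ->
  exists a b, simJ lt J y a /\ simJ lt J y b /\ lt a y /\ lt y b.
Proof.
  intros PJ.
  assert (Hz : exists z, simJ lt J y z /\ z <> y).
  { apply NNPP. intro N. apply (proj1 (class_proper y PJ)). exists y. intro z. split.
    - intro Hz. apply NNPP. intro Ne. apply N. exists z. auto.
    - intros ->. apply simJ_refl. }
  destruct Hz as [z [Hyz Hne]].
  destruct (Hhom z y) as [g [Hg Hgz]].
  assert (Hygy : simJ lt J y (g y)) by (rewrite <- Hgz at 1; apply simJ_aut, simJ_sym; auto).
  destruct (chain_total Hch z y) as [H | [-> | H]]; [| contradiction |].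
  - exists z, (g y). repeat split; auto. rewrite <- Hgz at 1. exact (proj2 Hg _ _ H).
  - exists (g y), z. repeat split; auto. rewrite <- Hgz at 2. exact (proj2 Hg _ _ H).
Qed.

Lemma class_open x : proper J -> order_open lt (simJ lt J x).
Proof.
  intros PJ y Hy.
  destruct (class_two_sided y PJ) as [a [b [Ha [Hb [Hay Hyb]]]]].
  exists (Some a), (Some b). simpl. split; [exact Hay | split; [exact Hyb |]].
  intros z Haz Hzb.
  apply (proj2 (class_interval x) a z b); eauto using simJ_trans.
Qed.

Lemma simJ_incl_of_class_incl K x :
  (forall z, simJ lt J x z -> simJ lt K x z) -> forall a b, simJ lt J a b -> simJ lt K a b.
Proof.
  intros H a b Hab.
  destruct (Hhom x a) as [h [Hh Hhx]].
  destruct (aut_inv Hch h Hh) as [hi [Hhi [Hl Hr]]].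
  rewrite <- Hhx, <- (Hr b). apply simJ_aut; [exact Hh |].
  apply H. rewrite <- (Hl x), Hhx. apply simJ_aut; auto.
Qed.

End Classes.

Lemma class_pri J x : proper_regular_interval lt J -> proper_regular_interval lt (simJ lt J x).
Proof.
  intros [IJ [RJ PJ]].
  split; [apply class_interval | split; [apply class_regular | apply class_proper]]; auto.
Qed.

Lemma simJ_comparable J K (x : T) : proper_regular_interval lt J -> proper_regular_interval lt K ->
  (forall a b, simJ lt J a b -> simJ lt K a b) \/ (forall a b, simJ lt K a b -> simJ lt J a b).
Proof.
  intros [IJ [RJ _]] [IK [RK _]].
  destruct (regular_intervals_nested (simJ lt J x) (simJ lt K x) x) as [H | H];
    auto using class_interval, class_regular, simJ_refl;
    [left | right]; eapply simJ_incl_of_class_incl; eauto.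
Qed.

End RegularIntervals.

Section Quotient.
Context {T : Type} (lt : T -> T -> Prop).
Hypothesis Hch : is_chain lt.
Hypothesis Hhom : homogeneous lt.
Variable J : T -> Prop.
Hypothesis IJ : interval lt J.
Hypothesis RJ : regular lt J.

Definition cls (x : T) : quot lt J := exist _ (simJ lt J x) (ex_intro _ x eq_refl).

Definition rep (C : quot lt J) : T :=
  proj1_sig (constructive_indefinite_description _ (proj2_sig C)).

Lemma rep_spec C : proj1_sig C = simJ lt J (rep C).
Proof. unfold rep. destruct (constructive_indefinite_description _ _) as [x Hx]. exact Hx. Qed.

Lemma cls_rep C : cls (rep C) = C.
Proof. apply proj1_sig_inj. symmetry. apply rep_spec. Qed.

Lemma cls_eq_iff x y : cls x = cls y <-> simJ lt J x y.
Proof.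
  split.
  - intros E. apply (f_equal (@proj1_sig _ _)) in E. simpl in E.
    rewrite E. apply simJ_refl.
  - intros H. apply proj1_sig_inj. simpl.
    apply functional_extensionality. intro z. apply propositional_extensionality.
    split; intro Hz; eapply simJ_trans; eauto. apply simJ_sym; auto.
Qed.

Lemma cls_of_mem (C : quot lt J) z : proj1_sig C z -> cls z = C.
Proof.
  rewrite rep_spec. intro H. rewrite <- (cls_rep C). symmetry. apply cls_eq_iff, H.
Qed.

Definition ind (h : T -> T) (C : quot lt J) : quot lt J := cls (h (rep C)).

Lemma ind_cls h x : is_aut lt h -> ind h (cls x) = cls (h x).
Proof. intro Hh. apply cls_eq_iff, simJ_aut, cls_eq_iff, cls_rep. exact Hh. Qed.

Lemma quot_lt_cls x y : lt x y -> ~ simJ lt J x y -> quot_lt lt J (cls x) (cls y).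
Proof.
  intros Hxy N a b Ha Hb.
  apply (interval_lt_of_disjoint Hch (simJ lt J x) (simJ lt J y) x y);
    auto using class_interval, simJ_refl.
  intros z Hz Hz'. apply N. apply simJ_trans with z; [| apply simJ_sym]; auto.
Qed.

Lemma ind_aut h : is_aut lt h -> is_aut (quot_lt lt J) (ind h).
Proof.
  intro Hh. destruct (aut_inv Hch h Hh) as [hi [Hhi [Hl Hr]]]. split.
  - exists (ind hi).
    split; intro C; rewrite <- (cls_rep C), !ind_cls; auto; [rewrite Hl | rewrite Hr]; auto.
  - assert (Hpre : forall C a, proj1_sig (ind h C) a -> proj1_sig C (hi a)).
    { intros C a Ha. rewrite rep_spec, <- (Hl (rep C)). apply simJ_aut; [exact Hhi | exact Ha]. }
    intros C D HCD a b Ha Hb.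
    rewrite <- (Hr a), <- (Hr b). apply Hh, HCD; apply Hpre; assumption.
Qed.

Variable j0 : T.
Hypothesis Hj0 : J j0.

Definition shift (C : quot lt J) : T -> T :=
  proj1_sig (constructive_indefinite_description _ (Hhom j0 (rep C))).

Lemma shift_spec C : is_aut lt (shift C) /\ shift C j0 = rep C.
Proof. unfold shift. destruct (constructive_indefinite_description _ _) as [h Hh]. exact Hh. Qed.

Definition unshift (C : quot lt J) : T -> T :=
  proj1_sig (constructive_indefinite_description _ (aut_inv Hch _ (proj1 (shift_spec C)))).

Lemma unshift_spec C : is_aut lt (unshift C) /\
  (forall x, unshift C (shift C x) = x) /\ (forall y, shift C (unshift C y) = y).
Proof. unfold unshift. destruct (constructive_indefinite_description _ _) as [h Hh]. exact Hh. Qed.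

Lemma cls_shift C y : J y -> cls (shift C y) = C.
Proof.
  intro Hy. destruct (shift_spec C) as [Hs Hs0].
  transitivity (cls (rep C)); [| apply cls_rep].
  rewrite <- Hs0. apply cls_eq_iff, simJ_sym, simJ_aut, simJ_of_mem; auto.
Qed.

Lemma unshift_mem C z : cls z = C -> J (unshift C z).
Proof.
  intro Hz. destruct (shift_spec C) as [Hs Hs0]. destruct (unshift_spec C) as [_ [_ Hr]].
  eapply simJ_mem; [exact Hj0 |].
  apply (simJ_aut_reflect Hch J (shift C)); [exact Hs |].
  rewrite Hr, Hs0. apply cls_eq_iff. rewrite cls_rep. symmetry. exact Hz.
Qed.

Definition lift (phi : quot lt J -> quot lt J) (x : T) : T :=
  shift (phi (cls x)) (unshift (cls x) x).

Lemma lift_cls phi x : cls (lift phi x) = phi (cls x).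
Proof. apply cls_shift, unshift_mem. reflexivity. Qed.

Lemma lift_cancel phi psi : (forall C, psi (phi C) = C) -> forall x, lift psi (lift phi x) = x.
Proof.
  intros H x. unfold lift at 1. rewrite lift_cls, H.
  unfold lift. destruct (unshift_spec (phi (cls x))) as [_ [Hl _]].
  destruct (unshift_spec (cls x)) as [_ [_ Hr]]. rewrite Hl. apply Hr.
Qed.

Lemma lift_aut phi : is_aut (quot_lt lt J) phi -> is_aut lt (lift phi).
Proof.
  intros [[psi [Hl Hr]] Hm]. split.
  - exists (lift psi). split; apply lift_cancel; assumption.
  - intros x y Hxy. destruct (classic (simJ lt J x y)) as [S | S].
    + unfold lift. rewrite <- (proj2 (cls_eq_iff x y) S).
      apply (proj1 (shift_spec _)), (proj1 (unshift_spec _)), Hxy.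
    + apply (Hm _ _ (quot_lt_cls x y Hxy S)); rewrite <- lift_cls; apply simJ_refl.
Qed.

Lemma lift_factor g v1 v2 f : is_aut lt g ->
  is_aut (quot_lt lt J) v2 -> is_aut (quot_lt lt J) f ->
  (forall C, ind g C = v1 (f (v2 C))) ->
  exists u1, is_aut lt u1 /\ (forall x, cls (u1 x) = v1 (cls x)) /\
    forall x, g x = u1 (lift f (lift v2 x)).
Proof.
  intros Hg Hv2 Hf Hfact.
  destruct (aut_inv Hch _ (lift_aut v2 Hv2)) as [u2i [Hu2i [Hl2 Hr2]]].
  destruct (aut_inv Hch _ (lift_aut f Hf)) as [fi [Hfi [Hlf Hrf]]].
  exists (fun x => g (u2i (fi x))). split; [auto using aut_comp | split].
  - intro x. rewrite <- (ind_cls g _ Hg), Hfact, <- (lift_cls v2), Hr2, <- (lift_cls f), Hrf.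
    reflexivity.
  - intro x. rewrite Hlf, Hl2. reflexivity.
Qed.

End Quotient.

Section SubChains.
Context {T : Type} {lt : T -> T -> Prop}.
Hypothesis Hch : is_chain lt.
Hypothesis Hhom : homogeneous lt.
Variable I : T -> Prop.
Hypothesis II : interval lt I.
Hypothesis RI : regular lt I.

Lemma aut_restrict g a : I a -> I (g a) -> is_aut lt g ->
  exists g' : {z | I z} -> {z | I z},
    is_aut (sub_lt lt I) g' /\ forall z, proj1_sig (g' z) = g (proj1_sig z).
Proof.
  intros Ia Iga Hg.
  destruct (aut_inv Hch g Hg) as [gi [Hgi [Hl Hr]]].
  assert (F : forall z, I z -> I (g z)) by (intros z Hz; exact (RI a z g Ia Hz Hg Iga)).
  assert (B : forall z, I z -> I (gi z)).
  { intros z Hz. apply (RI (g a) z gi); auto. rewrite Hl. exact Ia. }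
  exists (fun z => exist I (g (proj1_sig z)) (F _ (proj2_sig z))). split; [| reflexivity].
  split.
  - exists (fun z => exist I (gi (proj1_sig z)) (B _ (proj2_sig z))).
    split; intro z; apply proj1_sig_inj; simpl; auto.
  - intros u v. apply Hg.
Qed.

Lemma homogeneous_sub : homogeneous (sub_lt lt I).
Proof.
  intros [a Ha] [b Hb]. destruct (Hhom a b) as [g [Hg Hgab]].
  destruct (aut_restrict g a Ha (eq_ind_r I Hb Hgab) Hg) as [g' [Hg' Hgg']].
  exists g'. split; [exact Hg' |]. apply proj1_sig_inj. rewrite Hgg'. exact Hgab.
Qed.

Variable K' : {z | I z} -> Prop.

Definition sub_image (z : T) : Prop := exists H : I z, K' (exist _ z H).

Lemma sub_image_iff z (H : I z) : sub_image z <-> K' (exist _ z H).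
Proof.
  split; [| intro HK; exists H; exact HK].
  intros [H' HK]. replace H with H' by apply proof_irrelevance. exact HK.
Qed.

Lemma sub_image_interval : interval (sub_lt lt I) K' -> interval lt sub_image.
Proof.
  intros [[[k Ik] Kk] CK]. split; [exists k, Ik; exact Kk |].
  intros a b c [Ia Ka] [Ic Kc] Hab Hbc.
  assert (Ib : I b) by exact (proj2 II a b c Ia Ic Hab Hbc).
  exists Ib. exact (CK (exist _ a Ia) (exist _ b Ib) (exist _ c Ic) Ka Kc Hab Hbc).
Qed.

Lemma sub_image_regular : regular (sub_lt lt I) K' -> regular lt sub_image.
Proof.
  intros RK a b g [Ia Ka] [Ib Kb] Hg [Iga Kga].
  destruct (aut_restrict g a Ia Iga Hg) as [g' [Hg' Hgg']].
  assert (Kgb : K' (g' (exist _ b Ib))).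
  { apply (RK _ _ g' Ka Kb Hg').
    replace (g' (exist _ a Ia)) with (exist _ (g a) Iga)
      by (apply proj1_sig_inj; rewrite Hgg'; reflexivity).
    exact Kga. }
  specialize (Hgg' (exist _ b Ib)). destruct (g' (exist _ b Ib)) as [z Iz]. simpl in Hgg'.
  subst z. exists Iz. exact Kgb.
Qed.

Lemma sub_image_missing : ~ (forall y, K' y) -> exists w, I w /\ ~ sub_image w.
Proof.
  intros NK. apply not_all_ex_not in NK as [[w Iw] Nw].
  exists w. split; [exact Iw |]. rewrite (sub_image_iff w Iw). exact Nw.
Qed.

Lemma sub_image_not_singleton : ~ (exists c, forall y, K' y <-> y = c) ->
  ~ (exists c, forall y, sub_image y <-> y = c).
Proof.
  intros NS [c Hc]. apply NS.
  destruct (proj2 (Hc c) eq_refl) as [Ic Kc].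
  exists (exist _ c Ic). intros [z Iz]. rewrite <- (sub_image_iff z Iz), Hc.
  split; [intros ->; apply proj1_sig_inj; reflexivity |].
  intros E. apply (f_equal (@proj1_sig _ _)) in E. exact E.
Qed.

Lemma pri_of_sub_pri : proper_regular_interval (sub_lt lt I) K' ->
  exists K, proper_regular_interval lt K /\ (forall z, K z -> I z) /\ exists w, I w /\ ~ K w.
Proof.
  intros [IK [RK [NS NT]]].
  destruct (sub_image_missing NT) as [w [Iw Nw]].
  exists sub_image. split; [| split; [intros z [Iz _]; exact Iz | exists w; auto]].
  split; [apply sub_image_interval, IK | split; [apply sub_image_regular, RK | split]].
  - apply sub_image_not_singleton, NS.
  - intro Hall. exact (Nw (Hall w)).
Qed.

End SubChains.

Section Shrinking.
Context {T : Type} {lt : T -> T -> Prop}.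
Hypothesis Hch : is_chain lt.
Hypothesis Hhom : homogeneous lt.
Hypothesis Hns : ~ simple lt.
Hypothesis Hsub : forall J : T -> Prop, proper_regular_interval lt J -> ~ simple (sub_lt lt J).

Lemma exists_pri : exists J, proper_regular_interval lt J.
Proof.
  apply NNPP. intro N. apply Hns. split; [exact Hhom |]. intros J HJ. apply N. exists J. exact HJ.
Qed.

Lemma exists_pri_at x : exists J, proper_regular_interval lt J /\ J x.
Proof.
  destruct exists_pri as [J HJ].
  exists (simJ lt J x). split; [apply class_pri | apply simJ_refl]; auto.
Qed.

Lemma pri_shrink I : proper_regular_interval lt I ->
  exists K, proper_regular_interval lt K /\ (forall z, K z -> I z) /\ exists w, I w /\ ~ K w.
Proof.
  intros PI. pose proof PI as [II [RI _]].
  assert (HK' : exists K', proper_regular_interval (sub_lt lt I) K').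
  { apply NNPP. intro N. apply (Hsub I PI). split; [apply homogeneous_sub; auto |].
    intros K' HK'. apply N. exists K'. exact HK'. }
  destruct HK' as [K' HK']. exact (pri_of_sub_pri Hch I II RI K' HK').
Qed.

Definition pri_meet (x y : T) : Prop := forall J, proper_regular_interval lt J -> J x -> J y.

Lemma pri_meet_interval x : interval lt (pri_meet x).
Proof.
  split; [exists x; intros J _ Jx; exact Jx |].
  intros a b c Ha Hc Hab Hbc J PJ Jx.
  exact (proj2 (proj1 PJ) a b c (Ha J PJ Jx) (Hc J PJ Jx) Hab Hbc).
Qed.

Lemma pri_meet_regular x : regular lt (pri_meet x).
Proof.
  intros a b g Ha Hb Hg Hga J PJ Jx.
  exact (proj1 (proj2 PJ) a b g (Ha J PJ Jx) (Hb J PJ Jx) Hg (Hga J PJ Jx)).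
Qed.

Lemma pri_meet_singleton x y : pri_meet x y -> y = x.
Proof.
  intro Hy. apply NNPP. intro Hne.
  assert (Hx : pri_meet x x) by (intros J _ Jx; exact Jx).
  assert (PI : proper_regular_interval lt (pri_meet x)).
  { split; [apply pri_meet_interval | split; [apply pri_meet_regular | split]].
    - intros [c Hc]. apply Hne. rewrite (proj1 (Hc y) Hy), (proj1 (Hc x) Hx). reflexivity.
    - intro Hall. destruct (exists_pri_at x) as [J [PJ Jx]].
      apply (proj2 (proj2 (proj2 PJ))). intro z. exact (Hall z J PJ Jx). }
  destruct (pri_shrink _ PI) as [K [PK [KI [w [Iw Nw]]]]].
  destruct (proj1 (proj1 PK)) as [k Kk].
  destruct (Hhom k x) as [h [Hh Hhk]].
  assert (Ihw : pri_meet x (h w)).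
  { apply (pri_meet_regular x k w h (KI k Kk) Iw Hh). rewrite Hhk. exact Hx. }
  apply Nw. eapply simJ_mem; [exact Kk |]. apply (simJ_aut_reflect Hch K h k w Hh).
  rewrite Hhk. exact (Ihw _ (class_pri Hch Hhom K x PK) (simJ_refl K x)).
Qed.

Lemma pri_above_at x l : above lt l x ->
  exists J, proper_regular_interval lt J /\ J x /\ forall z, J z -> above lt l z.
Proof.
  destruct l as [a |]; simpl; intro Hax.
  - assert (Na : ~ pri_meet x a).
    { intros Ha%pri_meet_singleton. subst. exact (chain_irrefl Hch x Hax). }
    apply not_all_ex_not in Na as [J [PJ [Jx Na]%imply_to_and]%imply_to_and].
    exists J. split; [exact PJ | split; [exact Jx |]].
    intros z Jz. exact (interval_above Hch J x a z (proj1 PJ) Jx Na Hax Jz).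
  - destruct (exists_pri_at x) as [J [PJ Jx]]. exists J. auto.
Qed.

Lemma pri_below_at x u : below lt u x ->
  exists J, proper_regular_interval lt J /\ J x /\ forall z, J z -> below lt u z.
Proof.
  destruct u as [a |]; simpl; intro Hxa.
  - assert (Na : ~ pri_meet x a).
    { intros Ha%pri_meet_singleton. subst. exact (chain_irrefl Hch x Hxa). }
    apply not_all_ex_not in Na as [J [PJ [Jx Na]%imply_to_and]%imply_to_and].
    exists J. split; [exact PJ | split; [exact Jx |]].
    intros z Jz. exact (interval_below Hch J x a z (proj1 PJ) Jx Na Hxa Jz).
  - destruct (exists_pri_at x) as [J [PJ Jx]]. exists J. auto.
Qed.

Lemma pri_inside_open x O : order_open lt O -> O x ->
  exists J, proper_regular_interval lt J /\ J x /\ forall y, J y -> O y.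
Proof.
  intros HO Ox. destruct (HO x Ox) as [l [u [Hl [Hu Hlu]]]].
  destruct (pri_above_at x l Hl) as [J1 [P1 [X1 A1]]].
  destruct (pri_below_at x u Hu) as [J2 [P2 [X2 B2]]].
  destruct (regular_intervals_nested Hch Hhom J1 J2 x) as [S | S];
    try solve [apply P1 | apply P2 | assumption].
  - exists J1. split; [exact P1 | split; [exact X1 |]]. intros y Hy. apply Hlu; auto.
  - exists J2. split; [exact P2 | split; [exact X2 |]]. intros y Hy. apply Hlu; auto.
Qed.

Lemma pri_classes_inside_opens (s : list (T * (T -> Prop))) :
  (forall p, In p s -> order_open lt (snd p) /\ snd p (fst p)) ->
  exists J, proper_regular_interval lt J /\
    forall p, In p s -> forall y, simJ lt J (fst p) y -> snd p y.
Proof.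
  induction s as [| p s IH]; intro Hs.
  - destruct exists_pri as [J PJ]. exists J. split; [exact PJ | intros p []].
  - destruct IH as [J [PJ HJ]]; [intros q Hq; apply Hs; right; exact Hq |].
    destruct (Hs p (or_introl eq_refl)) as [Op Xp].
    destruct (pri_inside_open (fst p) (snd p) Op Xp) as [Jp [PJp [Xp' HJp]]].
    destruct (simJ_comparable Hch Hhom J Jp (fst p) PJ PJp) as [S | S].
    + exists J. split; [exact PJ |]. intros q [<- | Hq] y Hy; [| exact (HJ q Hq y Hy)].
      apply HJp. eapply simJ_mem; [exact Xp' | exact (S _ _ Hy)].
    + exists Jp. split; [exact PJp |]. intros q [<- | Hq] y Hy; [| exact (HJ q Hq y (S _ _ Hy))].
      apply HJp. eapply simJ_mem; [exact Xp' | exact Hy].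
Qed.

End Shrinking.

Section Roelcke.
Context {T : Type} {lt : T -> T -> Prop}.
Hypothesis Hch : is_chain lt.
Hypothesis Hhom : homogeneous lt.

Lemma tau_p_nbhd_ind J V : proper_regular_interval lt J -> tau_d_nbhd (quot_lt lt J) V ->
  tau_p_nbhd lt (fun g => V (ind lt J g)).
Proof.
  intros [IJ [RJ PJ]] [A HA].
  exists (map (fun C => (rep lt J C, proj1_sig C)) A). split.
  - intros p Hp. apply in_map_iff in Hp as [C [<- _]]. simpl.
    rewrite rep_spec. split; [apply class_open | apply simJ_refl]; auto.
  - intros g Hg Hfix. apply HA; [apply ind_aut; auto |].
    intros C HC. apply (cls_of_mem lt Hch Hhom J IJ RJ).
    apply (Hfix (rep lt J C, proj1_sig C)), in_map_iff. exists C. auto.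
Qed.

Lemma roelcke_quot_of_roelcke J : proper_regular_interval lt J ->
  roelcke_precompact lt (tau_p_nbhd lt) ->
  roelcke_precompact (quot_lt lt J) (tau_d_nbhd (quot_lt lt J)).
Proof.
  intros PJ RP V HV. pose proof PJ as [IJ [RJ _]]. destruct (proj1 IJ) as [j0 Hj0].
  destruct (RP _ (tau_p_nbhd_ind J V PJ HV)) as [F [HF HFact]].
  exists (map (ind lt J) F). split.
  - intros f Hf. apply in_map_iff in Hf as [f0 [<- Hf0]]. apply ind_aut; auto.
  - intros phi Hphi.
    destruct (HFact _ (lift_aut lt Hch Hhom J IJ RJ j0 Hj0 phi Hphi))
      as [u1 [u2 [f [Hu1 [U1 [Hu2 [U2 [Hf Hfact]]]]]]]].
    exists (ind lt J u1), (ind lt J u2), (ind lt J f).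
    split; [apply ind_aut; auto | split; [exact U1 |]].
    split; [apply ind_aut; auto | split; [exact U2 |]].
    split; [apply in_map; exact Hf |].
    intro C. rewrite <- (cls_rep lt J C), !(ind_cls lt Hch Hhom J IJ RJ), <- Hfact by auto.
    symmetry. apply lift_cls; assumption.
Qed.

Lemma roelcke_of_roelcke_quot :
  ~ simple lt ->
  (forall J : T -> Prop, proper_regular_interval lt J -> ~ simple (sub_lt lt J)) ->
  (forall J : T -> Prop, proper_regular_interval lt J ->
     roelcke_precompact (quot_lt lt J) (tau_d_nbhd (quot_lt lt J))) ->
  roelcke_precompact lt (tau_p_nbhd lt).
Proof.
  intros Hns Hsub RPq U [s [Hs HU]].
  destruct (pri_classes_inside_opens Hch Hhom Hns Hsub s Hs) as [J [PJ HJ]].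
  pose proof PJ as [IJ [RJ _]]. destruct (proj1 IJ) as [j0 Hj0].
  assert (Hstab : forall g, is_aut lt g ->
            (forall p, In p s -> cls lt J (g (fst p)) = cls lt J (fst p)) -> U g).
  { intros g Hg Hfix. apply HU; [exact Hg |]. intros p Hp. apply (HJ p Hp).
    apply (cls_eq_iff lt Hch Hhom J IJ RJ). symmetry. apply Hfix, Hp. }
  set (V := fun phi : quot lt J -> quot lt J =>
              forall p, In p s -> phi (cls lt J (fst p)) = cls lt J (fst p)).
  assert (HV : tau_d_nbhd (quot_lt lt J) V).
  { exists (map (fun p => cls lt J (fst p)) s). intros phi _ Hphi p Hp.
    apply Hphi, in_map_iff. exists p. auto. }
  destruct (RPq J PJ V HV) as [F [HF HFact]].
  exists (map (lift lt Hch Hhom J j0) F). split.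
  - intros f Hf. apply in_map_iff in Hf as [f' [<- Hf']]. apply lift_aut; auto.
  - intros g Hg.
    destruct (HFact (ind lt J g) (ind_aut lt Hch Hhom J IJ RJ g Hg))
      as [v1 [v2 [f [Hv1 [V1 [Hv2 [V2 [Inf Hfact]]]]]]]].
    destruct (lift_factor lt Hch Hhom J IJ RJ j0 Hj0 g v1 v2 f Hg Hv2 (HF f Inf) Hfact)
      as [u1 [Hu1 [Hu1_cls Hgu]]].
    exists u1, (lift lt Hch Hhom J j0 v2), (lift lt Hch Hhom J j0 f).
    split; [exact Hu1 | split].
    { apply Hstab; [exact Hu1 |]. intros p Hp. rewrite Hu1_cls. apply V1, Hp. }
    split; [apply lift_aut; auto | split].
    { apply Hstab; [apply lift_aut; auto |]. intros p Hp. rewrite lift_cls by auto. apply V2, Hp. }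
    split; [apply in_map; exact Inf | exact Hgu].
Qed.

End Roelcke.

Theorem theorem5p3 (T : Type) (lt : T -> T -> Prop) :
  is_chain lt ->
  homogeneous lt ->
  ~ simple lt ->
  (forall J : T -> Prop, proper_regular_interval lt J -> ~ simple (sub_lt lt J)) ->
  (roelcke_precompact lt (tau_p_nbhd lt) <->
   forall J : T -> Prop, proper_regular_interval lt J ->
     roelcke_precompact (quot_lt lt J) (tau_d_nbhd (quot_lt lt J))).
Proof.
  intros Hch Hhom Hns Hsub. split.
  - intros RP J PJ. exact (roelcke_quot_of_roelcke Hch Hhom J PJ RP).
  - exact (roelcke_of_roelcke_quot Hch Hhom Hns Hsub).
Qed.
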